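(* Let $\varphi(x)=a_nx^n+\cdots+a_1x+a_0\in\mathbb{C}[x]$ with $a_n\neq0$ have $n$ distinct roots $x_1,\dots,x_n$. Define numbers $b_{j,k}$ ($j=-1,0,\dots,n-1$, $k=0,\dots,n-1$) by $b_{-1,k}=0$, $$b_{n-i,0}=(n-(i-1))\,a_{n-(i-1)},\qquad i=1,\dots,n,$$ $$b_{n-i,k}=-\frac{a_{n-i}}{a_n}\,b_{n-1,k-1}+b_{n-(i+1),k-1},\qquad i=1,\dots,n,\ k=1,\dots,n-1.$$ Then the Newton sums $N_k=\sum_{i=1}^n x_i^k$ satisfy $$N_k=\frac{b_{n-1,k}}{a_n},\qquad k=0,1,\dots,n-1.$$
   Context: Equivalently, $b_{n-1,k}x^{n-1}+\cdots+b_{1,k}x+b_{0,k}$ is the unique polynomial of degree less than $n$ in the coset of $\varphi'(x)x^k$ in $R/(\varphi(x))$, where $R\subset\mathbb{C}(x)$ is the subring of rational functions $p/q$ ($p,q\in\mathbb{C}[x]$) with $q(x_i)\neq0$ at every root $x_i$ of $\varphi$, and $(\varphi(x))$ is the ideal of $R$ generated by $\varphi$. *)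

(* The complex numbers are modelled as R[i] = complex R
   for an arbitrary R : realType (any such R[i] is isomorphic to C). *)
From HB Require Import structures.
From mathcomp Require Import all_boot all_order all_algebra.
From mathcomp Require Import reals.
From mathcomp Require Export complex.
Set Implicit Arguments. Unset Strict Implicit. Unset Printing Implicit Defensive.
Import Order.TTheory GRing.Theory Num.Theory.
Local Open Scope ring_scope.

(* bsh a n k m  is  b_{m-1,k}  of the paper (index shifted by one so that
   m = 0 corresponds to j = -1), where a i is the coefficient a_i:
     b_{-1,k}   = 0
     b_{j,0}    = (j+1) a_{j+1}                         (j = n-i, i = 1..n)
     b_{j,k+1}  = -(a_j / a_n) b_{n-1,k} + b_{j-1,k}     (j = n-i, i = 1..n) *)
Fixpoint bsh {F : fieldType} (a : nat -> F) (n : nat) (k : nat) (m : nat) : F :=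
  match m with
  | 0 => 0
  | m'.+1 =>
      match k with
      | 0 => m'.+1%:R * a m'.+1
      | k'.+1 => - (a m' / a n) * bsh a n k' n + bsh a n k' m'
      end
  end.

Definition bcoef {F : fieldType} (a : nat -> F) (n : nat) (j : int) (k : nat) : F :=
  match j with
  | Posz j' => bsh a n k j'.+1
  | Negz _ => 0
  end.

(* Write phi = a_n * prod_i (X - x_i) and Q_i = prod_(j != i) (X - x_j), so
   that phi' = a_n * sum_i Q_i.  The polynomials S_k = a_n * sum_i x_i^k Q_i
   have degree below n, their coefficient of X^(n-1) is a_n N_k, and since
   X Q_i = x_i Q_i + prod_j (X - x_j) they satisfy S_(k+1) = X S_k - N_k phi.
   This is exactly the recursion defining the b_(j,k) as the coefficients of
   S_k, whence b_(n-1,k) = a_n N_k. *)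

From mathcomp Require Import all_boot all_order all_algebra.
From mathcomp Require Import reals complex.
From mathcomp Require Import ring.
Set Implicit Arguments. Unset Strict Implicit. Unset Printing Implicit Defensive.
Import GRing.Theory.
Local Open Scope ring_scope.

Lemma deriv_prod (R : comNzRingType) (I : eqType) (s : seq I) (f : I -> {poly R}) :
  uniq s ->
  (\prod_(j <- s) f j)^`() = \sum_(i <- s) (f i)^`() * \prod_(j <- s | j != i) f j.
Proof.
elim: s => [|a s IHs] /=; first by rewrite !big_nil derivC.
case/andP=> a_notin_s s_uniq.
have neq_a j : j \in s -> (a != j) && (j != a).
  by move=> j_in_s; rewrite eq_sym andbb; apply: contraNneq a_notin_s => <-.
rewrite !big_cons derivM IHs // eqxx /= mulr_sumr.
have -> : \prod_(j <- s | j != a) f j = \prod_(j <- s) f j.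
  by rewrite big_seq_cond [RHS]big_seq; apply: eq_bigl => j;
     case: (boolP (j \in s)) => //= /neq_a/andP[].
congr (_ + _); rewrite !big_seq; apply: eq_bigr => i /neq_a/andP[a_neq_i _].
by rewrite big_cons a_neq_i mulrCA.
Qed.

Lemma inj_roots_prod_XsubC (F : fieldType) (n : nat) (phi : {poly F})
    (x : 'I_n -> F) :
  size phi = n.+1 -> injective x -> (forall i, root phi (x i)) ->
  phi = lead_coef phi *: \prod_(i < n) ('X - (x i)%:P).
Proof.
move=> size_phi x_inj x_root.
rewrite -(big_image _ _ x predT (fun z => 'X - z%:P)).
apply: all_roots_prod_XsubC.
- by rewrite size_image card_ord.
- by apply/allP => _ /imageP[i _ ->].
- by rewrite uniq_rootsE map_inj_uniq ?enum_uniq.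
Qed.

Section NewtonRemainder.
Variable F : fieldType.

(* When [size phi = n.+1], [newton_rem phi n k] is the remainder of
   [phi^`() * 'X^k] modulo [phi]: multiplying by ['X] and cancelling the
   coefficient of ['X^n] against [phi] keeps the degree below [n]. *)
Fixpoint newton_rem (phi : {poly F}) (n k : nat) : {poly F} :=
  if k is k'.+1 then
    let S := newton_rem phi n k' in 'X * S - (S`_n.-1 / phi`_n) *: phi
  else phi^`().

Lemma coef_newton_rem (phi : {poly F}) n k m : (m < n)%N ->
  (newton_rem phi n k)`_m = bsh (fun j => phi`_j) n k m.+1.
Proof.
elim: k m => [|k IHk] m m_lt_n /=; first by rewrite coef_deriv mulr_natl.
have n_gt0 : (0 < n)%N by apply: leq_ltn_trans m_lt_n.
have top : (newton_rem phi n k)`_n.-1 = bsh (fun j => phi`_j) n k n.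
  by rewrite IHk ?prednK ?ltn_predL.
rewrite coefB coefXM coefZ top.
case: m m_lt_n => [|m] m_lt_n /=.
  have -> : bsh (fun j => phi`_j) n k 0 = 0 by case: k {IHk top}.
  by ring.
by rewrite IHk 1?ltnW //; ring.
Qed.

End NewtonRemainder.

Section SplitPolynomial.
Variables (F : fieldType) (n : nat) (x : 'I_n -> F) (c : F).
Hypothesis c_neq0 : c != 0.

Let P := \prod_(i < n) ('X - (x i)%:P).
Let Q i := \prod_(j < n | j != i) ('X - (x j)%:P).

Lemma size_prod_XsubC_fam : size P = n.+1.
Proof. by rewrite /P -big_enum size_prod_XsubC size_enum_ord. Qed.

Lemma coef_prod_XsubC_fam : P`_n = 1.
Proof.
rewrite -[n]/(n.+1.-1) -size_prod_XsubC_fam -lead_coefE.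
exact/monicP/monic_prod_XsubC.
Qed.

Lemma XsubC_mul_cofactor i : ('X - (x i)%:P) * Q i = P.
Proof. by rewrite /P (bigD1 i). Qed.

Lemma coef_cofactor i : (Q i)`_n.-1 = 1.
Proof.
have Q_monic : Q i \is monic by apply: monic_prod_XsubC.
have size_Q : size (Q i) = n.
  have := size_prod_XsubC_fam; rewrite -(XsubC_mul_cofactor i).
  by rewrite size_monicM ?monicXsubC ?monic_neq0 // size_XsubC => -[].
by rewrite -size_Q -lead_coefE; apply/monicP.
Qed.

Lemma coef_sum_cofactor k :
  (\sum_(i < n) x i ^+ k *: Q i)`_n.-1 = \sum_(i < n) x i ^+ k.
Proof. by rewrite coef_sum; under eq_bigr do rewrite coefZ coef_cofactor mulr1. Qed.

Lemma newton_rem_prod_XsubC k :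
  newton_rem (c *: P) n k = c *: \sum_(i < n) x i ^+ k *: Q i.
Proof.
elim: k => [|k IHk] /=.
  rewrite derivZ deriv_prod ?index_enum_uniq //; congr (c *: _).
  by apply: eq_bigr => i _; rewrite derivXsubC mul1r expr0 scale1r.
rewrite IHk !coefZ coef_sum_cofactor coef_prod_XsubC_fam mulr1 [c * _]mulrC mulfK //.
rewrite -scalerAr scalerA [_ * c]mulrC -scalerA -scalerBr mulr_sumr scaler_suml -sumrB.
congr (c *: _); apply: eq_bigr => i _.
by rewrite -(XsubC_mul_cofactor i) -!mul_polyC exprS polyCM; ring.
Qed.

Lemma coef_newton_rem_prod_XsubC k :
  (newton_rem (c *: P) n k)`_n.-1 = c * \sum_(i < n) x i ^+ k.
Proof. by rewrite newton_rem_prod_XsubC coefZ coef_sum_cofactor. Qed.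

End SplitPolynomial.

Theorem corollary1 (R : realType) (n : nat) (phi : {poly R[i]})
  (x : 'I_n -> R[i]) :
  size phi = n.+1 ->
  injective x ->
  (forall i, root phi (x i)) ->
  forall k : nat, (k < n)%N ->
    \sum_(i < n) x i ^+ k
      = bcoef (fun j => phi`_j) n (Posz n - 1) k / phi`_n.
Proof.
move=> size_phi x_inj x_root k k_lt_n.
have n_gt0 : (0 < n)%N by apply: leq_ltn_trans k_lt_n.
have lead_phi : lead_coef phi = phi`_n by rewrite lead_coefE size_phi.
have phi_n_neq0 : phi`_n != 0.
  by rewrite -lead_phi lead_coef_eq0 -size_poly_eq0 size_phi.
have -> : Posz n - 1 = Posz n.-1 by rewrite -subn1 -subzn.
rewrite /= -coef_newton_rem ?ltn_predL //.
rewrite {1}(inj_roots_prod_XsubC size_phi x_inj x_root) lead_phi.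
by rewrite coef_newton_rem_prod_XsubC // mulrC mulKf.
Qed.
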